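(* Let $m\ge1$ and let $q$ be an indeterminate. Over $\mathbb{Q}(q)$, with $m\times m$ matrices indexed by $[0,m-1]$, let $V_q=(q^{ij})_{i,j}$, $G_q=\bigl(\begin{bmatrix}i\\ j\end{bmatrix}\bigr)_{i,j}$ and $D_q$ the diagonal matrix with $i$th entry $[i]!\,(q-1)^i\,q^{\binom{i}{2}}$. Then \[ V_q\,(G_q^{-1})^{\mathrm T}=G_q\,D_q . \]
   Context: For integers $i\ge0$, $j\in\mathbb{Z}$: $[i]=(q^i-1)/(q-1)$, $[i]!=\prod_{k=1}^i[k]$, and $\begin{bmatrix}i\\ j\end{bmatrix}=[i]!/([j]![i-j]!)$ if $j\in[0,i]$, $0$ otherwise. $G_q$ is invertible (lower unitriangular); $^{\mathrm T}$ denotes transpose. *)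

From HB Require Import structures.
From mathcomp Require Import all_boot all_order all_algebra.
Set Implicit Arguments. Unset Strict Implicit. Unset Printing Implicit Defensive.
Import Order.TTheory GRing.Theory Num.Theory.
Local Open Scope ring_scope.

Definition Qq : fieldType := {fraction {poly rat}}.
Definition qX : Qq := tofrac ('X : {poly rat}).

Definition qint (i : nat) : Qq := (qX ^+ i - 1) / (qX - 1).
Definition qfact (i : nat) : Qq := \prod_(1 <= k < i.+1) qint k.
Definition qbinom (i j : nat) : Qq :=
  if (j <= i)%N then qfact i / (qfact j * qfact (i - j)) else 0.

Definition Vq (m : nat) : 'M[Qq]_m := \matrix_(i < m, j < m) qX ^+ (i * j).
Definition Gq (m : nat) : 'M[Qq]_m := \matrix_(i < m, j < m) qbinom i j.
Definition Dq (m : nat) : 'M[Qq]_m :=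
  diag_mx (\row_(i < m) (qfact i * (qX - 1) ^+ i * qX ^+ 'C(i, 2))).

(* Expanding x^j in the basis of q-falling factorials (x;q)_k = prod_(t<k) (x - q^t)
   gives the q-Newton formula x^j = sum_k [j k] (x;q)_k, and at x = q^i one has
   (q^i;q)_k = [i k] [k]! (q-1)^k q^C(k,2).  Hence V_q = G_q D_q G_q^T, and G_q is
   unitriangular, so it can be cancelled. *)

From mathcomp Require Import all_boot all_order all_algebra.
From mathcomp Require Import ring.
Import GRing.Theory.
Local Open Scope ring_scope.

Lemma qXn_sub1_eq0 k : (qX ^+ k - 1 == 0) = (k == 0)%N.
Proof.
case: k => [|k]; first by rewrite expr0 subrr !eqxx.
rewrite /qX -rmorphXn -(rmorph1 (@tofrac _)) -rmorphB tofrac_eq0.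
by rewrite -size_poly_eq0 -polyC1 size_XnsubC.
Qed.

Lemma qX_sub1_neq0 : qX - 1 != 0.
Proof. by rewrite -[qX]expr1 qXn_sub1_eq0. Qed.

Lemma mul_qint_qX1 k : qint k * (qX - 1) = qX ^+ k - 1.
Proof. by rewrite mulfVK // qX_sub1_neq0. Qed.

Lemma qint_eq0 k : (qint k == 0) = (k == 0)%N.
Proof.
by rewrite -qXn_sub1_eq0 -mul_qint_qX1 [RHS]mulf_eq0 (negPf qX_sub1_neq0) orbF.
Qed.

Lemma qintD m n : qint (m + n) = qint m + qX ^+ m * qint n.
Proof. by rewrite /qint mulrA -mulrDl exprD; congr (_ / _); ring. Qed.

Lemma qfact0 : qfact 0 = 1.
Proof. by rewrite /qfact big_geq. Qed.

Lemma qfactS k : qfact k.+1 = qfact k * qint k.+1.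
Proof. by rewrite /qfact big_nat_recr. Qed.

Lemma qfact_neq0 k : qfact k != 0.
Proof.
elim: k => [|k IHk]; first by rewrite qfact0 oner_eq0.
by rewrite qfactS mulf_eq0 qint_eq0 (negPf IHk).
Qed.

Lemma qbinom_small n k : (n < k)%N -> qbinom n k = 0.
Proof. by rewrite /qbinom ltnNge => /negPf ->. Qed.

Lemma qbinom0 n : qbinom n 0 = 1.
Proof. by rewrite /qbinom subn0 qfact0 mul1r divff ?qfact_neq0. Qed.

Lemma qbinomn n : qbinom n n = 1.
Proof. by rewrite /qbinom leqnn subnn qfact0 mulr1 divff ?qfact_neq0. Qed.

Lemma qbinom_qfact k s : qbinom (k + s) k * qfact k * qfact s = qfact (k + s).
Proof.
by rewrite /qbinom leq_addr addKn -mulrA mulfVK // mulf_neq0 ?qfact_neq0.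
Qed.

Lemma qbinomS n k : qbinom n.+1 k.+1 = qbinom n k + qX ^+ k.+1 * qbinom n k.+1.
Proof.
case: (ltngtP k n) => [lt_kn | lt_nk | ->]; last first.
- by rewrite !qbinomn qbinom_small // mulr0 addr0.
- by rewrite !qbinom_small // ?mulr0 ?addr0 // ltnW.
have [s ->] : exists s, n = (k.+1 + s)%N by exists (n - k.+1)%N; rewrite subnKC.
apply: (mulIf (qfact_neq0 s.+1)); apply: (mulIf (qfact_neq0 k.+1)).
rewrite mulrAC -addnS qbinom_qfact addnS qfactS -addnS qintD mulrDr.
rewrite {1}addSnnS -{1}(qbinom_qfact k s.+1) -addSnnS -(qbinom_qfact k.+1 s).
rewrite !qfactS; ring.
Qed.

Definition qfalling (k : nat) (x : Qq) : Qq := \prod_(t < k) (x - qX ^+ t).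

Lemma qfalling0 x : qfalling 0 x = 1.
Proof. exact: big_ord0. Qed.

Lemma qfallingS k x : qfalling k.+1 x = qfalling k x * (x - qX ^+ k).
Proof. exact: big_ord_recr. Qed.

Lemma mul_qfalling k x : x * qfalling k x = qfalling k.+1 x + qX ^+ k * qfalling k x.
Proof. by rewrite qfallingS; ring. Qed.

Lemma qbinom_expansion M n x :
  (n < M)%N -> x ^+ n = \sum_(k < M) qbinom n k * qfalling k x.
Proof.
elim: n => [|n IHn] ltnM.
  case: M ltnM => // M _; rewrite big_ord_recl big1 => [|k _]; last first.
    by rewrite qbinom_small ?mul0r.
  by rewrite qbinom0 qfalling0 mul1r addr0.
case: M ltnM IHn => // M ltnM IHn.
rewrite exprS IHn 1?ltnW // mulr_sumr.
under eq_bigr do rewrite mulrCA mul_qfalling mulrDr.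
rewrite big_split /= big_ord_recr /= qbinom_small // mul0r addr0.
rewrite [in X in _ + X]big_ord_recl [RHS]big_ord_recl !qbinom0 expr0 !mul1r.
rewrite addrCA -big_split; congr (_ + _); apply: eq_bigr => k _.
by rewrite lift0 /= qbinomS; ring.
Qed.

Lemma qfalling_qXnD k s :
  qfalling k (qX ^+ (k + s)) * qfact s = qfact (k + s) * (qX - 1) ^+ k * qX ^+ 'C(k, 2).
Proof.
elim: k s => [|k IHk] s; first by rewrite qfalling0 add0n !expr0 mul1r !mulr1.
have qX_sub : qX ^+ (k + s.+1) - qX ^+ k = qX ^+ k * (qint s.+1 * (qX - 1)).
  by rewrite mul_qint_qX1 exprD; ring.
rewrite qfallingS addSnnS qX_sub.
transitivity (qfalling k (qX ^+ (k + s.+1)) * qfact s.+1 * (qX ^+ k * (qX - 1))).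
  by rewrite qfactS; ring.
by rewrite IHk binS bin1 exprD exprS; ring.
Qed.

Lemma qfalling_qXn j k :
  qfalling k (qX ^+ j) = qbinom j k * (qfact k * (qX - 1) ^+ k * qX ^+ 'C(k, 2)).
Proof.
case: (leqP k j) => [le_kj | lt_jk].
  have [s ->] : exists s, j = (k + s)%N by exists (j - k)%N; rewrite subnKC.
  apply: (mulIf (qfact_neq0 s)); rewrite qfalling_qXnD -(qbinom_qfact k s); ring.
by rewrite qbinom_small // mul0r /qfalling (bigD1 (Ordinal lt_jk)) //= subrr mul0r.
Qed.

Lemma Vq_GDGt m : Vq m = Gq m *m Dq m *m (Gq m)^T.
Proof.
apply/matrixP => i j; rewrite mul_mx_diag !mxE exprM (qbinom_expansion _ _ _ (ltn_ord j)).
by apply: eq_bigr => k _; rewrite !mxE qfalling_qXn; ring.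
Qed.

Lemma unitmx_unitrig (R : comUnitRingType) n (A : 'M[R]_n) :
  is_trig_mx A -> (forall i, A i i = 1) -> A \in unitmx.
Proof. by move=> trigA diagA; rewrite unitmxE (det_trig trigA) big1 ?unitr1. Qed.

Lemma Gq_unitmx m : Gq m \in unitmx.
Proof.
apply: unitmx_unitrig => [|i]; last by rewrite mxE qbinomn.
by apply/is_trig_mxP => i j lt_ij; rewrite mxE qbinom_small.
Qed.

Theorem lemma3p5 (m : nat) (hm : (1 <= m)%N) :
  Vq m *m (invmx (Gq m))^T = Gq m *m Dq m.
Proof.
by rewrite Vq_GDGt -mulmxA -trmx_mul mulVmx ?Gq_unitmx // trmx1 mulmx1.
Qed.
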